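(* Let $R$ be a complete intersection SAGA of codimension $n+1$ presented by quadrics. If $[t_1],\dots,[t_k]\in\mathcal N_2$ are distinct points, then $\prod_{i=1}^k t_i\neq0$ in $R$ and $t_1,\dots,t_k$ are linearly independent in $R^1$. In particular $\#\mathcal N_2\le n+1$.
   Context: $\mathbb K$ is an algebraically closed field of characteristic $0$. A complete intersection SAGA of codimension $n+1$ presented by quadrics is $R=S/I$ with $S=\mathbb K[x_0,\dots,x_n]$ and $I$ generated by a regular sequence of $n+1$ homogeneous quadrics; it is a standard graded Artinian Gorenstein algebra with socle in degree $N=n+1$. $\mathcal N_k=\{[x]\in\mathbb P(R^1)\mid x^k=0\}$. *)

From mathcomp Require Import all_boot all_order all_algebra.
From mathcomp Require Export mpoly.
Set Implicit Arguments. Unset Strict Implicit. Unset Printing Implicit Defensive.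
Import GRing.Theory.
Local Open Scope ring_scope.

Definition in_ideal (K : fieldType) (n m : nat) (g : 'I_m -> {mpoly K[n]})
  (P : pred 'I_m) (p : {mpoly K[n]}) : Prop :=
  exists c : 'I_m -> {mpoly K[n]}, p = \sum_(i < m | P i) c i * g i.

Definition regular_sequence (K : fieldType) (n m : nat)
  (g : 'I_m -> {mpoly K[n]}) : Prop :=
  ~ in_ideal g xpredT 1 /\
  forall (i : 'I_m) (p : {mpoly K[n]}),
    in_ideal g (fun j : 'I_m => (j < i)%N) (p * g i) ->
    in_ideal g (fun j : 'I_m => (j < i)%N) p.

Definition CI_quadrics (K : fieldType) (n : nat)
  (q : 'I_n.+1 -> {mpoly K[n.+1]}) : Prop :=
  (forall i, q i \is 2.-homog) /\ regular_sequence q.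

(* Membership of a linear form t in N_2 (via a representative t of a
   nonzero class [t] in R^1 with t^2 = 0 in R = S/I). *)
Definition in_N2 (K : fieldType) (n : nat) (q : 'I_n.+1 -> {mpoly K[n.+1]})
  (t : {mpoly K[n.+1]}) : Prop :=
  t \is 1.-homog /\ ~ in_ideal q xpredT t /\ in_ideal q xpredT (t ^+ 2).

From mathcomp Require Import all_boot all_order all_algebra.
From mathcomp Require Import mpoly.
From mathcomp Require Import ring.
Import GRing.Theory.
Local Open Scope ring_scope.
Set Implicit Arguments. Unset Strict Implicit.

(* Induction on k, changing the presentation of the ideal at each step.
   Since t_1^2 lies in I, comparing degree-2 parts writes t_1^2 as a
   combination of the quadrics with constant coefficients, one of them
   nonzero (a combination of the linear generators alone would make t_1^2,
   hence t_1, vanish on their common zeros, forcing t_1 into I).  That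
   quadric may be replaced by t_1^2; homogeneous regular sequences can be
   permuted, so t_1^2 and therefore t_1 becomes a nonzerodivisor modulo the
   remaining generators g'.  Hence y t_1 in I forces y in (t_1, g'), and the
   remaining t_i satisfy the same hypotheses modulo (t_1, g'), distinctness
   surviving because 2 is invertible.  A linear relation sum c_i t_i in I,
   multiplied by the product of the t_j with j <> i, gives c_i t_1...t_k in I,
   so c_i = 0; linear independence of linear forms then bounds k. *)

Section IdealMembership.
Variable R : comPzRingType.
Implicit Types (s : seq R) (a c p x y : R).

Inductive mem_ideal s : R -> Prop :=
  | mem_ideal0 : mem_ideal s 0
  | mem_idealD x y : mem_ideal s x -> mem_ideal s y -> mem_ideal s (x + y)
  | mem_idealMl c x : mem_ideal s x -> mem_ideal s (c * x)
  | mem_ideal_gen a : a \in s -> mem_ideal s a.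

Lemma mem_idealMr s c x : mem_ideal s x -> mem_ideal s (x * c).
Proof. by rewrite mulrC; apply: mem_idealMl. Qed.

Lemma mem_idealN s x : mem_ideal s x -> mem_ideal s (- x).
Proof. by rewrite -mulN1r; apply: mem_idealMl. Qed.

Lemma mem_idealB s x y : mem_ideal s x -> mem_ideal s y -> mem_ideal s (x - y).
Proof. by move=> hx hy; apply: mem_idealD => //; apply: mem_idealN. Qed.

Lemma mem_ideal_sum s (I : Type) (r : seq I) (P : pred I) (F : I -> R) :
  (forall i, P i -> mem_ideal s (F i)) -> mem_ideal s (\sum_(i <- r | P i) F i).
Proof. by apply: big_ind; [apply: mem_ideal0 | apply: mem_idealD]. Qed.

Lemma mem_ideal_trans s s' p :
  (forall a, a \in s -> mem_ideal s' a) -> mem_ideal s p -> mem_ideal s' p.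
Proof.
move=> hs; elim=> [|x y _ hx _ hy|c x _ hx|a /hs //].
- exact: mem_ideal0.
- exact: mem_idealD.
- exact: mem_idealMl.
Qed.

Lemma mem_ideal_sub s s' p : {subset s <= s'} -> mem_ideal s p -> mem_ideal s' p.
Proof. by move=> hs; apply: mem_ideal_trans => a /hs; apply: mem_ideal_gen. Qed.

Lemma mem_ideal_eq s s' : s =i s' -> forall p, mem_ideal s p <-> mem_ideal s' p.
Proof. by move=> e p; split; apply: mem_ideal_sub => a; rewrite e. Qed.

Lemma mem_ideal_consr a s p : mem_ideal s p -> mem_ideal (a :: s) p.
Proof. by apply: mem_ideal_sub => x hx; rewrite inE hx orbT. Qed.

Lemma mem_ideal_nil p : mem_ideal [::] p -> p = 0.
Proof. by elim=> // [x y _ -> _ ->|c x _ ->]; rewrite ?addr0 ?mulr0. Qed.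

Lemma mem_ideal_cons a s p : mem_ideal (a :: s) p <-> exists c, mem_ideal s (p - c * a).
Proof.
split=> [|[c hc]]; last first.
  have -> : p = (p - c * a) + c * a by ring.
  apply: mem_idealD; first exact: mem_ideal_consr.
  by apply/mem_idealMl/mem_ideal_gen; rewrite mem_head.
elim=> [|x y _ [c hc] _ [d hd]|c x _ [d hd]|b].
- by exists 0; rewrite mul0r subr0; apply: mem_ideal0.
- exists (c + d).
  have -> : x + y - (c + d) * a = (x - c * a) + (y - d * a) by ring.
  exact: mem_idealD.
- exists (c * d).
  have -> : c * x - c * d * a = c * (x - d * a) by ring.
  exact: mem_idealMl.
- rewrite inE => /orP [/eqP ->|hb].
    by exists 1; rewrite mul1r subrr; apply: mem_ideal0.
  by exists 0; rewrite mul0r subr0; apply: mem_ideal_gen.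
Qed.

Definition nzd s a := forall x, mem_ideal s (a * x) -> mem_ideal s x.

Lemma nzd_eq s s' a : s =i s' -> nzd s a -> nzd s' a.
Proof. by move=> e ha x; rewrite -!(mem_ideal_eq e); apply: ha. Qed.

Lemma nzd_sqr s a : nzd s (a * a) -> nzd s a.
Proof. by move=> ha x hx; apply: ha; rewrite -mulrA; apply: mem_idealMl. Qed.

(* [regular J s]: s is a regular sequence modulo the ideal of J; the
   elements already used are pushed in front of J, so in reverse order. *)
Fixpoint regular (J s : seq R) : Prop :=
  if s is a :: s' then nzd J a /\ regular (a :: J) s' else True.

Lemma regular_eq J J' s : J =i J' -> regular J s -> regular J' s.
Proof.
elim: s J J' => [//|a s IH] J J' e /= [ha hs]; split; first exact: nzd_eq ha.
by apply: IH hs => x; rewrite !inE e.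
Qed.

Lemma regular_cat J s1 s2 :
  regular J (s1 ++ s2) <-> regular J s1 /\ regular (catrev s1 J) s2.
Proof.
elim: s1 J => [|a s1 IH] J /=; first by split=> // [[]].
by rewrite IH; split=> [[h [h1 h2]] | [[h h1] h2]].
Qed.

Lemma regular_rcons J s a :
  regular J (rcons s a) <-> regular J s /\ nzd (catrev s J) a.
Proof. by rewrite -cats1 regular_cat /=; split=> [[h [h1 _]]|[h h1]]. Qed.

Lemma regular_sqr J s a : regular J (rcons s (a * a)) -> regular J (rcons s a).
Proof. by move=> /regular_rcons [hs ha]; apply/regular_rcons; split=> //; apply: nzd_sqr. Qed.

End IdealMembership.

Section HomogeneousIdeals.
Variables (K : fieldType) (N : nat).
Local Notation S := {mpoly K[N]}.
Local Notation pih := (pihomog mdeg).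
Implicit Types (s J g : seq S) (a b p t x y : S).

Lemma mem_idealZ s (c : K) x : mem_ideal s x -> mem_ideal s (c *: x).
Proof. by rewrite -mul_mpolyC; apply: mem_idealMl. Qed.

Lemma pihomog_dhomog d e p : p \is e.-homog -> pih d p = if e == d then p else 0.
Proof.
move=> he; case: eqP => [<-|/eqP ne]; first exact: pihomog_dE.
exact: pihomog_ne0 ne he.
Qed.

Lemma pihomogM_dhomog d e p b : b \is e.-homog ->
  pih d (p * b) = if (e <= d)%N then pih (d - e) p * b else 0.
Proof.
move=> hb; rewrite {1 2}[p]mpolyE big_distrl /= !raddf_sum /= big_distrl /=.
have hmb m : 'X_[m] * b \is (mdeg m + e)%N.-homog by apply: dhomogM; rewrite ?dhomogX.
case: ifP => hed; last first.
  apply: big1 => m _; rewrite -scalerAl linearZ /= (pihomog_dhomog d (hmb m)).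
  case: eqP => [hh|]; last by rewrite scaler0.
  by move: hed; rewrite -hh leq_addl.
apply: eq_bigr => m _; rewrite -scalerAl !linearZ /= -scalerAl; congr (_ *: _).
rewrite (pihomog_dhomog d (hmb m)) pihomogX.
have -> : (mdeg m + e == d)%N = (mdeg m == d - e)%N.
  by apply/eqP/eqP => [<-|->]; [rewrite addnK | rewrite subnK].
by case: ifP => _; rewrite ?mul0r.
Qed.

Lemma pihomogM d c x : pih d (c * x) =
  \sum_(j < mmeasure mdeg c) (if (j <= d)%N then pih (d - j) x * pih j c else 0).
Proof.
rewrite {1}(pihomog_partitionE (leqnn (mmeasure mdeg c))) big_distrl /= raddf_sum.
by apply: eq_bigr => j _; rewrite mulrC; apply/pihomogM_dhomog/pihomogP.
Qed.

Lemma dhomog0_const p : p \is 0.-homog -> p = (p@_0)%:MP.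
Proof.
move=> hp; apply/mpolyP => m; rewrite mcoeffC.
case: (eqVneq m 0%MM) => [->|hm]; first by rewrite mulr1.
by rewrite mulr0; apply: (dhomog_nemf_coeff hp); rewrite mdeg_eq0.
Qed.

Definition pos_homog a := exists2 e, (0 < e)%N & a \is e.-homog.

Definition homog_seq s := forall a, a \in s -> pos_homog a.

Lemma homog_seq_cons a s : homog_seq (a :: s) <-> pos_homog a /\ homog_seq s.
Proof.
split=> [h|[ha hs] x]; last by rewrite inE => /orP [/eqP ->|/hs].
by split=> [|x hx]; apply: h; rewrite inE ?eqxx ?hx ?orbT.
Qed.

Lemma mem_ideal_pihomog s p d : homog_seq s -> mem_ideal s p -> mem_ideal s (pih d p).
Proof.
move=> hs hp; elim: hp d => [|x y _ hx _ hy|c x _ hx|a ha] d.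
- by rewrite raddf0; apply: mem_ideal0.
- by rewrite raddfD; apply: mem_idealD (hx d) (hy d).
- rewrite pihomogM; apply: mem_ideal_sum => j _.
  by case: ifP => _; [apply: mem_idealMr (hx _) | apply: mem_ideal0].
- have [e _ he] := hs a ha; rewrite (pihomog_dhomog d he).
  by case: ifP => _; [apply: mem_ideal_gen | apply: mem_ideal0].
Qed.

Lemma homog_ideal_proper s : homog_seq s -> ~ mem_ideal s 1.
Proof.
move=> hs /(mem_ideal_pihomog 0 hs).
rewrite (pihomog_dhomog 0 (dhomog1 _ _)) eqxx => h1.
suff : pih 0 (1 : S) = 0 by rewrite (pihomog_dhomog 0 (dhomog1 _ _)) /=; apply/eqP/oner_neq0.
elim: h1 => [|x y _ hx _ hy|c x _ hx|a ha].
- by rewrite raddf0.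
- by rewrite pihomogD hx hy addr0.
- rewrite pihomogM; apply: big1 => j _.
  by case: ifP => // hj; rewrite leqn0 in hj; rewrite (eqP hj) subnn hx mul0r.
- have [e he0 he] := hs a ha; rewrite (pihomog_dhomog 0 he).
  by case: eqP => // e0; rewrite e0 in he0.
Qed.

Section SwapRegular.
Variables (J : seq S) (a b : S) (ea eb : nat).
Hypotheses (hJ : homog_seq J) (ea0 : (0 < ea)%N)
  (ha : a \is ea.-homog) (hb : b \is eb.-homog).
Hypotheses (ra : nzd J a) (rb : nzd (a :: J) b).

(* Induction on the degree: a relation b x = c a modulo J lowers the degree
   of x by ea, and a is a nonzerodivisor modulo J. *)
Lemma nzd_swap_dhomog d x : x \is d.-homog -> mem_ideal J (b * x) -> mem_ideal J x.
Proof.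
elim/ltn_ind: d x => d IH x hx hbx.
have /rb /mem_ideal_cons [c hc] := mem_ideal_consr a hbx.
have := mem_ideal_pihomog d hJ hc.
rewrite pihomogB (pihomog_dE hx) (pihomogM_dhomog _ _ ha).
case: ifP => hle; last by rewrite subr0.
set y := pih (d - ea) c => hxy.
have : mem_ideal J (a * (b * y)).
  have -> : a * (b * y) = b * x - b * (x - y * a) by ring.
  by apply: mem_idealB => //; apply: mem_idealMl.
have hlt : (d - ea < d)%N by rewrite ltn_subrL ea0 (leq_trans ea0 hle).
move/ra/(IH _ hlt y (pihomogP _ _ _)) => hy.
have -> : x = (x - y * a) + y * a by ring.
by apply: mem_idealD => //; apply: mem_idealMr.
Qed.

Lemma nzd_swap : nzd J b.
Proof.
move=> x hbx; rewrite (pihomog_partitionE (leqnn (mmeasure mdeg x))).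
apply: mem_ideal_sum => d _; apply: (@nzd_swap_dhomog d); first exact: pihomogP.
have := mem_ideal_pihomog (d + eb) hJ hbx.
by rewrite mulrC (pihomogM_dhomog _ _ hb) leq_addl addnK mulrC.
Qed.

Lemma nzd_cons_swap : nzd (b :: J) a.
Proof.
move=> x /mem_ideal_cons [z hz].
have : mem_ideal (a :: J) (b * z).
  apply/mem_ideal_cons; exists x.
  have -> : b * z - x * a = - (a * x - z * b) by ring.
  exact: mem_idealN.
move/rb/mem_ideal_cons => [w hw].
have : mem_ideal J (a * (x - w * b)).
  have -> : a * (x - w * b) = (a * x - z * b) + b * (z - w * a) by ring.
  by apply: mem_idealD => //; apply: mem_idealMl.
by move/ra => h; apply/mem_ideal_cons; exists w.
Qed.

End SwapRegular.

Lemma regular_swap J a b s : homog_seq J -> pos_homog a -> pos_homog b ->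
  regular J (a :: b :: s) -> regular J (b :: a :: s).
Proof.
move=> hJ [ea ea0 ha] [eb _ hb] /= [ra [rb rs]]; split.
  exact: nzd_swap hJ ea0 ha hb ra rb.
split; first exact: nzd_cons_swap ra rb.
by apply: regular_eq rs => x; rewrite !inE orbCA.
Qed.

Lemma regular_rotate J a s : homog_seq J -> homog_seq (a :: s) ->
  regular J (a :: s) -> regular J (rcons s a).
Proof.
elim: s J => [//|b s IH] J hJ /homog_seq_cons [ha /homog_seq_cons [hb hs]] h.
have /= [rb rs] := regular_swap hJ ha hb h; split => //.
by apply: IH rs; apply/homog_seq_cons.
Qed.

Lemma regular_move_last J s1 a s2 : homog_seq J -> homog_seq (s1 ++ a :: s2) ->
  regular J (s1 ++ a :: s2) -> regular J (s1 ++ rcons s2 a).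
Proof.
elim: s1 J => [|b s1 IH] J hJ /=; first exact: regular_rotate.
move=> /homog_seq_cons [hb hs] [rb rs]; split => //.
by apply: IH hs rs; apply/homog_seq_cons.
Qed.

Lemma regular_replace_last J s a b (c : K) : c != 0 ->
  mem_ideal (catrev s J) (b - c *: a) -> regular J (rcons s a) -> regular J (rcons s b).
Proof.
move=> c0 hb /regular_rcons [hs ha]; apply/regular_rcons; split => // x hx; apply: ha.
have : mem_ideal (catrev s J) (c *: (a * x)).
  have -> : c *: (a * x) = b * x - (b - c *: a) * x by rewrite -!mul_mpolyC; ring.
  by apply: mem_idealB => //; apply: mem_idealMr.
by move/(mem_idealZ c^-1); rewrite scalerA mulVf // scale1r.
Qed.

Lemma dhomog1_expand p : p \is 1.-homog -> p = \sum_(i < N) p@_U_(i) *: 'X_i.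
Proof.
move=> hp; apply/mpolyP => m; rewrite raddf_sum /=.
under eq_bigr => i _ do rewrite mcoeffZ mcoeffX.
case: (boolP (mdeg m == 1%N)) => [/mdeg1P [j /eqP ->]|hm].
  rewrite (bigD1 j) //= eqxx mulr1 big1 ?addr0 // => i hij.
  case: eqP => [/(congr1 (fun m : 'X_{1..N} => m j))|]; last by rewrite mulr0.
  by rewrite !mnm1E eqxx (negbTE hij).
rewrite (dhomog_nemf_coeff hp hm) big1 // => i _.
by case: eqP => [e|]; [move: hm; rewrite -e mdeg1 | rewrite mulr0].
Qed.

Lemma meval_dhomog1 p v : p \is 1.-homog -> p.@[v] = \sum_(i < N) p@_U_(i) * v i.
Proof.
move=> hp; rewrite {1}(dhomog1_expand hp) raddf_sum /=.
by apply: eq_bigr => i _; rewrite mevalZ mevalXU.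
Qed.

(* A point separating t from the span of L: a column of the cokernel of the
   coefficient matrix of L on which the coefficient row of t is nonzero. *)
Lemma separating_point (L : seq S) t : (forall l, l \in L -> l \is 1.-homog) ->
  t \is 1.-homog -> ~ mem_ideal L t ->
  exists v, (forall l, l \in L -> l.@[v] = 0) /\ t.@[v] != 0.
Proof.
move=> hL ht hnt.
pose M : 'M[K]_(size L, N) := \matrix_(r, j) (nth 0 L r)@_U_(j).
pose vt : 'rV[K]_N := \row_j t@_U_(j).
case: (boolP (vt <= M)%MS) => [/submxP [w hw]|].
  exfalso; apply: hnt.
  have -> : t = \sum_(r < size L) w 0 r *: nth 0 L r.
    rewrite (dhomog1_expand ht).
    under [in RHS]eq_bigr => r _ do
      rewrite (dhomog1_expand (hL _ (mem_nth 0 (ltn_ord r)))) scaler_sumr.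
    rewrite exchange_big /=; apply: eq_bigr => j _.
    have := congr1 (fun A : 'rV_N => A 0 j) hw; rewrite !mxE => ->.
    by rewrite scaler_suml; apply: eq_bigr => r _; rewrite scalerA mxE.
  apply: mem_ideal_sum => r _; exact: mem_idealZ _ (mem_ideal_gen (mem_nth 0 (ltn_ord r))).
rewrite submxE => hC.
have [j hj] : exists j, (vt *m cokermx M) 0 j != 0.
  apply/existsP; move: hC; apply: contraNT; rewrite negb_exists => /forallP h.
  by apply/eqP/matrixP => i k; rewrite ord1 [RHS]mxE; apply/eqP/negPn.
exists (fun i => cokermx M i j); split.
  move=> l hl; rewrite (meval_dhomog1 _ (hL _ hl)).
  have [r <-] : exists r : 'I_(size L), nth 0 L r = l.
    have hi : (index l L < size L)%N by rewrite index_mem.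
    by exists (Ordinal hi); rewrite nth_index.
  rewrite -[RHS](_ : (M *m cokermx M) r j = 0); last by rewrite mulmx_coker mxE.
  by rewrite mxE; apply: eq_bigr => i _; rewrite [M r i]mxE.
by rewrite (meval_dhomog1 _ ht); move: hj; rewrite mxE; under eq_bigr => i _ do rewrite mxE.
Qed.

Definition lin_quad_seq s := forall a, a \in s -> a \is 1.-homog \/ a \is 2.-homog.

Lemma lin_quad_homog_seq s : lin_quad_seq s -> homog_seq s.
Proof. by move=> h a /h [h1|h2]; [exists 1%N | exists 2%N]. Qed.

Lemma lin_quad_seq_sub s s' : {subset s <= s'} -> lin_quad_seq s' -> lin_quad_seq s.
Proof. by move=> h hs a /h /hs. Qed.

Lemma mem_ideal_cons_dhomog1 g t x : homog_seq g -> t \is 1.-homog -> x \is 1.-homog ->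
  mem_ideal (t :: g) x -> exists c : K, mem_ideal g (x - c *: t).
Proof.
move=> hg ht hx /mem_ideal_cons [h hh].
have := mem_ideal_pihomog 1 hg hh.
rewrite pihomogB (pihomog_dE hx) (pihomogM_dhomog _ _ ht) leqnn subnn.
rewrite (dhomog0_const (pihomogP _ _ h)) mul_mpolyC => hc.
by eexists; exact: hc.
Qed.

Lemma dhomog2_mem_ideal g p : lin_quad_seq g -> p \is 2.-homog -> mem_ideal g p ->
  (forall v, (forall l, l \in g -> l \is 1.-homog -> l.@[v] = 0) -> p.@[v] = 0) \/
  exists s1 a s2 (c : K),
    [/\ g = s1 ++ a :: s2, c != 0 & mem_ideal (s1 ++ s2) (p - c *: a)].
Proof.
elim: g p => [|a g IH] p hg hp.
  by move/mem_ideal_nil => ->; left => v _; rewrite meval0.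
have hg0 : lin_quad_seq g by apply: lin_quad_seq_sub hg => x hx; rewrite inE hx orbT.
have consl s1 b s2 : g = s1 ++ b :: s2 -> a :: g = (a :: s1) ++ b :: s2 by move=> ->.
move/mem_ideal_cons => [h hh].
have := mem_ideal_pihomog 2 (lin_quad_homog_seq hg0) hh.
rewrite pihomogB (pihomog_dE hp).
have [ha|ha] : a \is 1.-homog \/ a \is 2.-homog by apply: hg; rewrite inE eqxx.
  rewrite (pihomogM_dhomog _ _ ha) /= => hp'.
  have hp'h : p - pih 1 h * a \is 2.-homog.
    by apply: rpredB => //; apply: (@dhomogM _ _ mdeg 1 _ 1) => //; apply: pihomogP.
  case: (IH _ hg0 hp'h hp') => [hl|[s1 [b [s2 [c [e c0 hi]]]]]].
    left => v hv.
    have : (p - pih 1 h * a).@[v] = 0 by apply: hl => l hl; apply: hv; rewrite inE hl orbT.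
    by rewrite mevalB mevalM (hv a _ ha) ?inE ?eqxx // mulr0 subr0.
  right; exists (a :: s1), b, s2, c; split => //; first exact: consl.
  apply/mem_ideal_cons; exists (pih 1 h).
  by have -> : p - c *: b - pih 1 h * a = p - pih 1 h * a - c *: b by ring.
rewrite (pihomogM_dhomog _ _ ha) /= subnn (dhomog0_const (pihomogP _ _ h)) mul_mpolyC.
set c := (pih 0 h)@_0 => hp'.
have [c0|c0] := eqVneq c 0; last by right; exists [::], a, g, c.
rewrite c0 scale0r subr0 in hp'.
case: (IH _ hg0 hp hp') => [hl|[s1 [b [s2 [d [e d0 hi]]]]]].
  by left => v hv; apply: hl => l hl; apply: hv; rewrite inE hl orbT.
by right; exists (a :: s1), b, s2, d; split; [exact: consl | | exact: mem_ideal_consr].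
Qed.

Lemma regular_exchange g t : lin_quad_seq g -> regular [::] g -> t \is 1.-homog ->
  ~ mem_ideal g t -> mem_ideal g (t * t) ->
  exists g', [/\ lin_quad_seq g', regular [::] (rcons g' (t * t))
             & forall p, mem_ideal g p <-> mem_ideal (t * t :: g') p].
Proof.
move=> hg rg ht hnt htt.
have htt2 : t * t \is 2.-homog by apply: (@dhomogM _ _ mdeg 1 _ 1).
case: (dhomog2_mem_ideal hg htt2 htt) => [hl|[s1 [a [s2 [c [e c0 hi]]]]]].
  pose L := [seq l <- g | l \is 1.-homog].
  have hL l : l \in L -> l \is 1.-homog by rewrite mem_filter => /andP [].
  have hLt : ~ mem_ideal L t by move/(mem_ideal_sub (mem_subseq (filter_subseq _ _))).
  have [v [hv htv]] := separating_point hL ht hLt.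
  have : (t * t).@[v] = 0 by apply: hl => l hl h1; apply: hv; rewrite mem_filter h1 hl.
  by rewrite mevalM => /eqP; rewrite mulf_eq0 orbb (negbTE htv).
have ge x : x \in g = (x == a) || (x \in s1 ++ s2).
  by rewrite e !mem_cat inE orbCA.
exists (s1 ++ s2); split.
- by apply: lin_quad_seq_sub hg => x hx; rewrite ge hx orbT.
- have hJ : homog_seq [::] by [].
  have := @regular_move_last [::] s1 a s2 hJ; rewrite -e -rcons_cat.
  move=> /(_ (lin_quad_homog_seq hg) rg).
  by apply: regular_replace_last c0 _; apply: mem_ideal_sub hi => x; rewrite catrevE cats0 mem_rev.
- move=> p; split; apply: mem_ideal_trans => x.
    rewrite ge => /orP [/eqP ->|hx]; last by apply: mem_ideal_gen; rewrite inE hx orbT.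
    have -> : a = c^-1 *: (t * t - (t * t - c *: a)).
      by rewrite opprB addrC subrK scalerA mulVf // scale1r.
    apply: mem_idealZ; apply: mem_idealB (mem_ideal_consr _ hi).
    exact: mem_ideal_gen (mem_head _ _).
  rewrite inE => /orP [/eqP -> //|hx].
  by apply: mem_ideal_gen; rewrite ge hx orbT.
Qed.

Lemma mem_ideal_mul_of_sqr s x y t (c d : K) : (2%:R * c * d != 0) ->
  mem_ideal s (x * x) -> mem_ideal s (y * y) -> mem_ideal s (t * t) ->
  mem_ideal s (x - c *: y - d *: t) -> mem_ideal s (y * t).
Proof.
move=> hcd hx hy ht; set r := x - c *: y - d *: t => hr.
have -> : y * t = (2%:R * c * d)^-1 *: (x * x - r * (x + c *: y + d *: t)
                   - (c * c) *: (y * y) - (d * d) *: (t * t)).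
  apply/(@mulfI _ ((2%:R * c * d)%:MP)); first by rewrite mpolyC_eq0.
  rewrite /r -!mul_mpolyC [RHS]mulrA -mpolyCM mulfV // mul1r !mpolyCM mpolyCMn.
  by rewrite (_ : (1%:MP : S) = 1) //; ring.
apply: mem_idealZ; apply: mem_idealB (mem_idealZ _ ht); apply: mem_idealB (mem_idealZ _ hy).
exact: mem_idealB hx (mem_idealMr _ hr).
Qed.

Definition distinct_mod g x y := forall c : K, ~ mem_ideal g (x - c *: y).

Section ExchangeStep.
Variables (g g' : seq S) (t : S).
Hypotheses (ht : t \is 1.-homog) (hg' : lin_quad_seq g')
  (rg' : regular [::] (rcons g' t))
  (eqg : forall p, mem_ideal g p <-> mem_ideal (t * t :: g') p).

Lemma exchange_sub p : mem_ideal g' p -> mem_ideal g p.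
Proof. by move=> hp; apply/eqg; apply: mem_ideal_consr. Qed.

Lemma exchange_sub_cons p : mem_ideal g p -> mem_ideal (t :: g') p.
Proof.
move/eqg; apply: mem_ideal_trans => x; rewrite inE => /orP [/eqP ->|hx].
  exact: (mem_idealMl _ (mem_ideal_gen (mem_head _ _))).
by apply: mem_ideal_gen; rewrite inE hx orbT.
Qed.

Lemma exchange_cancel y : mem_ideal g (y * t) -> mem_ideal (t :: g') y.
Proof.
have /regular_rcons [_] := rg'; rewrite catrevE cats0 => /nzd_eq regt.
have {}regt : nzd g' t by apply: regt => x; rewrite mem_rev.
move=> /eqg /mem_ideal_cons [h hh]; apply/mem_ideal_cons; exists h; apply: regt.
by rewrite mulrBr mulrC mulrA [t * h]mulrC -mulrA.
Qed.

Lemma exchange_dhomog1 x : x \is 1.-homog ->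
  mem_ideal (t :: g') x -> exists c : K, mem_ideal g (x - c *: t).
Proof.
move=> hx /(mem_ideal_cons_dhomog1 (lin_quad_homog_seq hg') ht hx) [c hc].
by exists c; apply: exchange_sub.
Qed.

Lemma exchange_distinct (h2 : (2%:R : K) != 0) x y :
  x \is 1.-homog -> y \is 1.-homog -> mem_ideal g (x * x) -> mem_ideal g (y * y) ->
  distinct_mod g x t -> distinct_mod g y t -> distinct_mod g x y ->
  distinct_mod (t :: g') x y.
Proof.
move=> hx hy hxx hyy dxt dyt dxy c hc.
have hl : x - c *: y \is 1.-homog by rewrite rpredB ?rpredZ.
have [d hd] := exchange_dhomog1 hl hc.
have [c0|c0] := eqVneq c 0; first by apply: (dxt d); rewrite c0 scale0r subr0 in hd.
have [d0|d0] := eqVneq d 0; first by apply: (dxy c); rewrite d0 scale0r subr0 in hd.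
have htt : mem_ideal g (t * t) by apply/eqg/mem_ideal_gen; rewrite mem_head.
have /exchange_cancel /(exchange_dhomog1 hy) [e he] : mem_ideal g (y * t).
  by apply: (mem_ideal_mul_of_sqr _ hxx hyy htt hd); rewrite !mulf_neq0.
exact: (dyt e).
Qed.

End ExchangeStep.

Lemma prod_notin_ideal (h2 : (2%:R : K) != 0) (ts : seq S) g :
  lin_quad_seq g -> regular [::] g -> uniq ts ->
  (forall x, x \in ts -> [/\ x \is 1.-homog, ~ mem_ideal g x & mem_ideal g (x * x)]) ->
  (forall x y, x \in ts -> y \in ts -> x != y -> distinct_mod g x y) ->
  ~ mem_ideal g (\prod_(x <- ts) x).
Proof.
elim: ts g => [|t ts IH] g hg rg.
  by move=> _ _ _; rewrite big_nil; apply/homog_ideal_proper/lin_quad_homog_seq.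
move=> /= /andP [tnin uts] hts hd.
have inT x : x \in ts -> x \in t :: ts by move=> hx; rewrite inE hx orbT.
have [ht hnt htt] := hts t (mem_head _ _).
have [g' [hg' /regular_sqr rg' eqg]] := regular_exchange hg rg ht hnt htt.
have e : rcons g' t =i t :: g' by move=> x; rewrite mem_rcons.
have dt x : x \in ts -> distinct_mod g x t.
  by move=> hx; apply: hd; rewrite ?mem_head ?inT //; apply: contraNneq tnin => <-.
rewrite big_cons mulrC => /(exchange_cancel rg' eqg); rewrite -(mem_ideal_eq e).
apply: IH => //.
- by move=> x; rewrite mem_rcons inE => /orP [/eqP ->|/hg']; [left|].
- move=> x hx; have [hx1 hnx hxx] := hts x (inT x hx); split => //.
    by rewrite (mem_ideal_eq e) => /(exchange_dhomog1 ht hg' eqg hx1) [c /(dt x hx c)].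
  by rewrite (mem_ideal_eq e); apply: exchange_sub_cons eqg _ hxx.
- move=> x y hx hy nxy; rewrite /distinct_mod => c; rewrite (mem_ideal_eq e).
  have [hx1 _ hxx] := hts x (inT x hx); have [hy1 _ hyy] := hts y (inT y hy).
  by apply: (exchange_distinct ht hg' rg' eqg h2 hx1 hy1 hxx hyy (dt x hx) (dt y hy));
    apply: hd; rewrite ?inT.
Qed.

Lemma lin_indep_of_prod_notin k (t : 'I_k -> S) g :
  (forall i, mem_ideal g (t i * t i)) -> ~ mem_ideal g (\prod_(i < k) t i) ->
  forall c : 'I_k -> K, mem_ideal g (\sum_(i < k) c i *: t i) -> forall i, c i = 0.
Proof.
move=> htt hP c hc i0; apply/eqP; apply/negPn/negP => c0; apply: hP.
pose P' := \prod_(j < k | j != i0) t j.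
rewrite (bigD1 i0) //= -/P'.
have -> : t i0 * P' = (c i0)^-1 *: ((\sum_(i < k) c i *: t i) * P'
            - \sum_(j < k | j != i0) c j *: (t j * P')).
  rewrite (bigD1 i0) //= mulrDl -scalerAl big_distrl /=.
  rewrite (eq_bigr (fun j => c j *: (t j * P'))) => [|j _]; last by rewrite -scalerAl.
  by rewrite addrK scalerA mulVf // scale1r.
apply: mem_idealZ; apply: mem_idealB; first exact: mem_idealMr.
apply: mem_ideal_sum => j hj; apply: mem_idealZ.
by rewrite /P' (bigD1 j) //= mulrA; apply/mem_idealMr/htt.
Qed.

Lemma card_le_of_lin_indep k (t : 'I_k -> S) : (forall i, t i \is 1.-homog) ->
  (forall c : 'I_k -> K, \sum_(i < k) c i *: t i = 0 -> forall i, c i = 0) ->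
  (k <= N)%N.
Proof.
move=> ht hc.
pose T : 'M[K]_(k, N) := \matrix_(i, j) (t i)@_U_(j).
suff <- : \rank T = k by apply: rank_leq_col.
apply/eqP; rewrite eqn_leq rank_leq_row /= leqNgt; apply/negP => hlt.
have : kermx T != 0 by rewrite -mxrank_eq0 mxrank_ker subn_eq0 -ltnNge.
apply/negP; rewrite negbK; apply/eqP/row_matrixP => r; rewrite row0.
set w := row r (kermx T).
have hw : w *m T = 0 by rewrite /w -row_mul mulmx_ker row0.
apply/rowP => i0; rewrite [RHS]mxE; apply: (hc (fun i => w 0 i)).
under eq_bigr => i _ do rewrite (dhomog1_expand (ht i)) scaler_sumr.
rewrite exchange_big /=; apply: big1 => j _.
under eq_bigr => i _ do rewrite scalerA.
rewrite -scaler_suml.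
have := congr1 (fun A : 'rV_N => A 0 j) hw; rewrite !mxE => E.
by rewrite (eq_bigr (fun i => w 0 i * T i j)) ?E ?scale0r // => i _; rewrite [T i j]mxE.
Qed.

Lemma in_ideal_mem_ideal m (g : 'I_m -> S) (P : pred 'I_m) p :
  in_ideal g P p <-> mem_ideal [seq g i | i <- enum 'I_m & P i] p.
Proof.
split=> [[c ->]|hp].
  apply: mem_ideal_sum => i Pi; apply: mem_idealMl; apply: mem_ideal_gen.
  by apply: map_f; rewrite mem_filter Pi mem_enum.
elim: hp => [|x y _ [c1 ->] _ [c2 ->]|c x _ [c1 ->]|a].
- by exists (fun _ => 0); rewrite big1 // => i _; rewrite mul0r.
- exists (fun i => c1 i + c2 i).
  by rewrite -big_split; apply: eq_bigr => i _; rewrite mulrDl.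
- exists (fun i => c * c1 i).
  by rewrite mulr_sumr; apply: eq_bigr => i _; rewrite mulrA.
- move=> /mapP [i]; rewrite mem_filter => /andP [Pi _] ->.
  exists (fun j => (j == i)%:R); rewrite (bigD1 i) //= eqxx mul1r big1 ?addr0 //.
  by move=> j /andP [_ hj]; rewrite (negbTE hj) mul0r.
Qed.

Lemma regular_nth J s :
  (forall i, (i < size s)%N -> nzd (take i s ++ J) (nth 0 s i)) -> regular J s.
Proof.
elim: s J => [//|a s IH] J h /=; split; first by have := h 0%N isT; rewrite take0.
apply: IH => i hi; apply: nzd_eq (h i.+1 hi) => y.
by rewrite /= mem_cat !in_cons mem_cat; case: (y == a); rewrite ?orbT.
Qed.

Lemma regular_sequence_regular m (g : 'I_m -> S) :
  regular_sequence g -> regular [::] (map g (enum 'I_m)).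
Proof.
move=> [_ hr]; apply: regular_nth => i; rewrite size_map size_enum_ord => hi x.
have e : take i (map g (enum 'I_m)) ++ [::] =i
         [seq g j | j <- enum 'I_m & (nat_of_ord j < i)%N].
  rewrite cats0 -map_take; apply: eq_mem_map => j.
  rewrite mem_filter mem_enum andbT -(mem_map val_inj) map_take val_enum_ord.
  by rewrite take_iota mem_iota add0n /= leq_min ltn_ord andbT.
rewrite !(mem_ideal_eq e) -!in_ideal_mem_ideal (nth_map (Ordinal hi)) ?size_enum_ord //.
have -> : nth (Ordinal hi) (enum 'I_m) i = Ordinal hi.
  by apply: val_inj; rewrite /= nth_enum_ord.
by rewrite mulrC; apply: (hr (Ordinal hi)).
Qed.

End HomogeneousIdeals.

Theorem mainTheorem4 (K : closedFieldType) (char0 : [pchar K] =i pred0)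
  (n : nat) (q : 'I_n.+1 -> {mpoly K[n.+1]}) (HR : CI_quadrics q)
  (k : nat) (t : 'I_k -> {mpoly K[n.+1]})
  (HN2 : forall i, in_N2 q (t i))
  (Hdist : forall i j : 'I_k, i != j ->
             forall c : K, ~ in_ideal q xpredT (t i - c *: t j)) :
  [/\ ~ in_ideal q xpredT (\prod_(i < k) t i),
      (forall c : 'I_k -> K,
         in_ideal q xpredT (\sum_(i < k) c i *: t i) -> forall i, c i = 0)
    & (k <= n.+1)%N].
Proof.
have [hq rq] := HR.
set gl := map q (enum 'I_n.+1).
have eqI p : in_ideal q xpredT p <-> mem_ideal gl p.
  by apply: iff_trans (in_ideal_mem_ideal _ _ _) _; rewrite filter_predT.
have h2 : (2%:R : K) != 0 by have := char0 2%N; rewrite !inE /= => ->.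
have ht1 i : t i \is 1.-homog by case: (HN2 i).
have htt i : mem_ideal gl (t i * t i) by apply/eqI; rewrite -expr2; case: (HN2 i) => _ [].
have tinj : injective t.
  move=> i j e; apply/eqP/negP => /negP /Hdist /(_ 1); apply; apply/eqI.
  by rewrite e scale1r subrr; apply: mem_ideal0.
have Hprod : ~ mem_ideal gl (\prod_(i < k) t i).
  rewrite -(big_map t xpredT id) -[index_enum _]enumT.
  apply: prod_notin_ideal => //.
  - by move=> a /mapP [i _ ->]; right; apply: hq.
  - exact: regular_sequence_regular.
  - by rewrite map_inj_uniq ?enum_uniq.
  - by move=> x /mapP [i _ ->]; split=> // /eqI; case: (HN2 i) => _ [].
  - move=> x y /mapP [i _ ->] /mapP [j _ ->] nij c; rewrite -eqI.
    by apply: Hdist; apply: contra nij => /eqP ->.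
have Hindep := lin_indep_of_prod_notin htt Hprod.
split; [by rewrite eqI | by move=> c /eqI; apply: Hindep |].
by apply: card_le_of_lin_indep ht1 _ => c hc; apply: Hindep; rewrite hc; apply: mem_ideal0.
Qed.
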